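(* Let $G$ be a bridgeless cubic graph and let $\{e_1,e_2\}$ be a $2$-edge-cut of $G$, $e_1=u_1v_1$, $e_2=u_2v_2$, where $u_1,u_2$ lie in one component $H_1$ of $G-\{e_1,e_2\}$ and $v_1,v_2$ in the other component $H_2$. Let $G_1=H_1+e_1'$ and $G_2=H_2+e_2'$, where $e_1'=u_1u_2$ and $e_2'=v_1v_2$ are new edges (the graphs obtained by the $\{e_1,e_2\}$-reduction). Let $M_1$ and $M_2$ be well-spread perfect matchings of $G_1$ and $G_2$ respectively that agree on $e_1'$ and $e_2'$, i.e. $e_1'\in M_1$ if and only if $e_2'\in M_2$. Then $G$ has a well-spread perfect matching $M$; namely, $M=M_1\cup M_2$ if $e_1'\notin M_1$, and $M=(M_1\setminus\{e_1'\})\cup(M_2\setminus\{e_2'\})\cup\{e_1,e_2\}$ if $e_1'\in M_1$.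
   Context: Graphs may have parallel edges but no loops. Cubic: every vertex has degree $3$; bridgeless: no edge whose removal increases the number of connected components. A $k$-edge-cut is an inclusion-minimal edge cut of size $k$. A well-spread perfect matching of a bridgeless cubic graph is a perfect matching containing exactly one edge of each $3$-edge-cut of the graph. *)

(* Finite multigraphs (parallel edges allowed) given by a
   finite vertex type, a finite edge type and an endpoint map. *)
From mathcomp Require Import all_boot.
Set Implicit Arguments. Unset Strict Implicit. Unset Printing Implicit Defensive.

Record mgraph := MGraph {
  vert : finType;
  edge : finType;
  endp : edge -> vert * vert }.

Section Defs.
Variable g : mgraph.

Definition joins (e : edge g) (x y : vert g) : bool :=
  (endp e == (x, y)) || (endp e == (y, x)).

Definition incident (e : edge g) (v : vert g) : bool :=
  ((endp e).1 == v) || ((endp e).2 == v).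

Definition loopless : Prop := forall e : edge g, (endp e).1 != (endp e).2.

Definition deg (v : vert g) : nat := #|[set e | incident e v]|.

Definition cubic : Prop := forall v : vert g, deg v = 3.

Definition adjF (F : {set edge g}) : rel (vert g) :=
  fun x y => [exists e, (e \notin F) && joins e x y].

Definition ncomp (F : {set edge g}) : nat := n_comp (adjF F) predT.

Definition gcomp (F : {set edge g}) (x : vert g) : {set vert g} :=
  [set y | connect (adjF F) x y].

Lemma gcomp_self F x : x \in gcomp F x.
Proof. by rewrite inE connect0. Qed.

Definition bridgeless : Prop :=
  forall e : edge g, ~ (ncomp set0 < ncomp [set e]).

Definition edge_cut (F : {set edge g}) : Prop := ncomp set0 < ncomp F.

Definition k_edge_cut (k : nat) (F : {set edge g}) : Prop :=
  [/\ edge_cut F, forall F' : {set edge g}, F' \proper F -> ~ edge_cut F' & #|F| = k].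

Definition perfect_matching (M : {set edge g}) : Prop :=
  forall v : vert g, #|[set e in M | incident e v]| = 1.

Definition well_spread (M : {set edge g}) : Prop :=
  perfect_matching M /\ (forall C, k_edge_cut 3 C -> #|M :&: C| = 1).

(* The reduced graph: the subgraph induced on S plus a new edge ab (= None). *)
Section Reduce.
Variables (S : {set vert g}) (a b : vert g) (Ha : a \in S) (Hb : b \in S).

Definition rvert : finType := {x : vert g | x \in S}.
Definition redge_in (e : edge g) : bool := ((endp e).1 \in S) && ((endp e).2 \in S).
Definition redge : finType := option {e : edge g | redge_in e}.

Definition rendp (oe : redge) : rvert * rvert :=
  match oe with
  | Some e => (exist (fun x => x \in S) (endp (val e)).1 (proj1 (elimT andP (valP e))),
               exist (fun x => x \in S) (endp (val e)).2 (proj2 (elimT andP (valP e))))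
  | None => (exist (fun x => x \in S) a Ha, exist (fun x => x \in S) b Hb)
  end.

Definition reduce : mgraph := @MGraph rvert redge rendp.

Definition lift_old (N : {set edge reduce}) : {set edge g} :=
  [set e | [exists x : {e : edge g | redge_in e}, (val x == e) && (Some x \in N)]].
End Reduce.
End Defs.

(* Write S1, S2 for the vertex sets of H1, H2 and delta X for the set of edges with
   exactly one end in X. In a connected bridgeless graph no 3-edge-cut delta X contains
   both e1 and e2: delta X and delta S1 = {e1, e2} would then have a symmetric
   difference of size 1, which is the coboundary of the symmetric difference of X and S1.
   If X lies inside S1, delta X corresponds bijectively to a 3-edge-cut of G1, the new
   edge u1u2 standing for whichever of e1, e2 crosses X; as M agrees with M1 on H1 and
   contains e1, e2 exactly when M1 contains u1u2, M meets delta X once. The same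
   correspondence applied to singletons shows that M is a perfect matching.
   If X avoids u1 but meets both sides, split it into A inside S1 and B inside S2:
   delta A and delta B share only e2, so one of them is a 3-edge-cut lying on one side,
   which M meets once, and hence M does not contain all of delta X. In a cubic graph
   |M meet delta X| and |delta X| have the same parity, so M meets delta X once. *)

From mathcomp Require Import all_boot zify.
Set Implicit Arguments. Unset Strict Implicit. Unset Printing Implicit Defensive.

Section FinsetCounting.
Variable T : finType.
Implicit Types A B C M P Q : {set T}.

Definition symdiff A B : {set T} := (A :\: B) :|: (B :\: A).

Lemma in_symdiff A B x : (x \in symdiff A B) = (x \in A) (+) (x \in B).
Proof. by rewrite !inE; case: (x \in A); case: (x \in B). Qed.

Lemma symdiffC A B : symdiff A B = symdiff B A.
Proof. by rewrite /symdiff setUC. Qed.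

Lemma card_symdiff A B : #|symdiff A B| + 2 * #|A :&: B| = #|A| + #|B|.
Proof.
have -> : symdiff A B = (A :|: B) :\: (A :&: B).
  by apply/setP => x; rewrite in_symdiff !inE; case: (x \in A); case: (x \in B).
have sIU : A :&: B \subset A :|: B := subset_trans (subsetIl A B) (subsetUl A B).
rewrite cardsD (setIidPr sIU) -cardsUI.
by have := subset_leq_card sIU; lia.
Qed.

Lemma symdiff_not_subset P Q M :
  #|P| = 3 -> #|P :&: Q| = 1 -> #|M :&: P| = 1 -> ~~ (symdiff P Q \subset M).
Proof.
move=> P3 PQ1 MP1; apply/negP => sPQM.
have : P :\: Q \subset M :&: P.
  by rewrite subsetI subsetDl andbT (subset_trans _ sPQM) ?subsetUl.
by move/subset_leq_card; rewrite cardsD PQ1 P3 MP1.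
Qed.

Lemma card_odd_meet3 M C :
  #|C| = 3 -> odd #|M :&: C| -> ~~ (C \subset M) -> #|M :&: C| = 1.
Proof.
move=> C3 oddMC nCM.
have : #|M :&: C| <= 3 by rewrite -C3 subset_leq_card ?subsetIr.
have : #|M :&: C| != 3.
  apply: contra nCM => /eqP MC3.
  have /eqP <- : M :&: C == C by rewrite eqEcard subsetIr MC3 C3.
  exact: subsetIl.
by move: oddMC; case: #|M :&: C| => [|[|[|[]]]].
Qed.

End FinsetCounting.

Lemma sum_eq_mem (T : finType) (X : {set T}) a : \sum_(v in X) (a == v) = (a \in X).
Proof.
have [aX|aX] := boolP (a \in X).
  by rewrite (bigD1 a) //= eqxx big1 // => v /andP [_ /negbTE]; rewrite eq_sym => ->.
by rewrite big1 // => v vX; apply/eqP; rewrite eqb0; apply: contra aX => /eqP ->.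
Qed.

Lemma imset_preim_codom (T U : finType) (f : U -> T) (A : {set T}) (B : {set U}) :
  (forall h, (f h \in A) = (h \in B)) -> (forall e, e \in A -> exists h, e = f h) ->
  A = f @: B.
Proof.
move=> fAB codomA; apply/setP => e; apply/idP/imsetP => [eA | [h hB ->]].
  by have [h eh] := codomA e eA; exists h; rewrite // -fAB -eh.
by rewrite fAB.
Qed.

Lemma connect_homo_in (T U : finType) (e : rel T) (e' : rel U) (P : pred T) (f : T -> U) :
  (forall x y, P x -> e x y -> P y /\ connect e' (f x) (f y)) ->
  forall x y, P x -> connect e x y -> connect e' (f x) (f y).
Proof.
move=> homo x y Px /connectP [p pth ->]; elim: p x Px pth => [|z p IHp] x Px /=.
  by rewrite connect0.
case/andP=> exz pth; have [Pz xz] := homo _ _ Px exz.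
exact: connect_trans xz (IHp z Pz pth).
Qed.

Section Coboundary.
Variable g : mgraph.
Implicit Types (F A M : {set edge g}) (X Y S : {set vert g}) (e : edge g) (x y : vert g).

Definition delta X : {set edge g} := [set e | ((endp e).1 \in X) != ((endp e).2 \in X)].

Lemma in_delta X e : (e \in delta X) = (((endp e).1 \in X) != ((endp e).2 \in X)).
Proof. by rewrite inE. Qed.

Lemma joinsC e x y : joins e x y = joins e y x.
Proof. by rewrite /joins orbC. Qed.

Lemma joins_endp e : joins e (endp e).1 (endp e).2.
Proof. by rewrite /joins -surjective_pairing eqxx. Qed.

Lemma joins_delta e x y X : joins e x y -> (e \in delta X) = ((x \in X) != (y \in X)).
Proof.
by rewrite in_delta /joins; case: (endp e) => a b /orP [] /eqP [-> ->]; rewrite // eq_sym.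
Qed.

Lemma joins_redge_in e x y S : joins e x y -> redge_in S e = (x \in S) && (y \in S).
Proof.
by rewrite /joins /redge_in; case: (endp e) => a b /orP [] /eqP [-> ->]; rewrite // andbC.
Qed.

Lemma redge_in_delta S e : redge_in S e -> e \notin delta S.
Proof. by rewrite in_delta => /andP [-> ->]. Qed.

Lemma delta_sub_redge_in X S e :
  X \subset S -> e \in delta X -> e \notin delta S -> redge_in S e.
Proof.
move=> /subsetP sXS; have := sXS (endp e).1; have := sXS (endp e).2.
by rewrite !in_delta /redge_in; do 2!case: (_ \in X); do 2!case: (_ \in S) => //; auto.
Qed.

Lemma delta_sub_joins X S e x y :
  X \subset S -> joins e x y -> y \notin S -> (e \in delta X) = (x \in X).
Proof.
move=> sXS jxy yS; rewrite (joins_delta _ jxy) (negbTE (contra (subsetP sXS y) yS)).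
by case: (x \in X).
Qed.

Lemma deltaC X : delta (~: X) = delta X.
Proof. by apply/setP => e; rewrite !in_delta !inE; do 2!case: (_ \in X). Qed.

Lemma delta_symdiff X Y : delta (symdiff X Y) = symdiff (delta X) (delta Y).
Proof.
apply/setP => e; rewrite in_symdiff !in_delta !in_symdiff.
by do 2!case: (_ \in X); do 2!case: (_ \in Y).
Qed.

Lemma deltaI_subset S X Y :
  X \subset S -> Y \subset ~: S -> delta X :&: delta Y \subset delta S.
Proof.
move=> /subsetP sXS /subsetP sYS; apply/subsetP => e; rewrite !inE.
move: (sXS (endp e).1) (sXS (endp e).2) (sYS (endp e).1) (sYS (endp e).2); rewrite !inE.
by do 2!case: (_ \in X); do 2!case: (_ \in Y); do 2!case: (_ \in S).
Qed.

Lemma incident_delta A x : loopless g -> [set e in A | incident e x] = A :&: delta [set x].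
Proof.
move=> Hl; apply/setP => e; rewrite !inE /incident; congr andb.
case: (endp e) (Hl e) => a b /= ab.
case: (eqVneq a x) ab => [-> | _ _] /=; last by case: (_ == _).
by rewrite eq_sym => /negbTE ->.
Qed.

Lemma card_delta1 x : loopless g -> cubic g -> #|delta [set x]| = 3.
Proof.
move=> Hl Hc; rewrite -(Hc x) -[delta _]setTI -incident_delta //.
by apply: eq_card => e; rewrite !inE.
Qed.

Lemma adjF_sym F : symmetric (adjF F).
Proof. by move=> x y; apply: eq_existsb => e; rewrite joinsC. Qed.

Lemma adjF_csym F : connect_sym (adjF F).
Proof. exact/sym_connect_sym/adjF_sym. Qed.

Lemma connect_adjF_sub F F' x y :
  F \subset F' -> connect (adjF F') x y -> connect (adjF F) x y.
Proof.
move=> sFF'; apply: connect_sub => a b /existsP [e /andP [eF' je]].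
by apply/connect1/existsP; exists e; rewrite je andbT; apply: contra eF'; apply: subsetP.
Qed.

Lemma delta_connect F X x y :
  delta X \subset F -> connect (adjF F) x y -> (x \in X) = (y \in X).
Proof.
move=> sXF; apply: closed_connect => {}x {}y /existsP [e /andP [eF je]].
by apply/eqP/negPn; rewrite -(joins_delta _ je); apply: contra eF; apply: subsetP.
Qed.

Lemma delta_gcomp F x : delta (gcomp F x) \subset F.
Proof.
apply/subsetP => e; rewrite in_delta !inE; apply: contraR => eF.
have adj_e : adjF F (endp e).1 (endp e).2.
  by apply/existsP; exists e; rewrite eF joins_endp.
by rewrite (same_connect_r (adjF_csym F) (connect1 adj_e)).
Qed.

Definition connected : Prop := forall x y, connect (adjF (@set0 (edge g))) x y.

Lemma connected_from x : (forall y, connect (adjF set0) x y) -> connected.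
Proof. by move=> cx y z; apply: connect_trans (cx z); rewrite adjF_csym. Qed.

Lemma ncomp_connect F x : (forall y, connect (adjF F) x y) -> ncomp F = 1.
Proof.
move=> cx; rewrite /ncomp -(n_comp_connect (adjF_csym F) x).
by apply: eq_n_comp_r => y; rewrite !inE cx.
Qed.

Lemma ncomp_gt1 F x y : ~~ connect (adjF F) x y -> 1 < ncomp F.
Proof.
move=> nxy; have := n_comp_closure2 (adjF_csym F) x y; rewrite nxy => <-.
by apply: subset_leq_card; apply/subsetP => z; rewrite !inE => /andP [->].
Qed.

Lemma delta_neq0 X x y : connected -> x \in X -> y \notin X -> delta X != set0.
Proof.
move=> cn xX yX; apply/negP => /eqP dX0.
have sX0 : delta X \subset set0 by rewrite dX0.
by have := delta_connect sX0 (cn x y); rewrite xX (negbTE yX).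
Qed.

Lemma edge_cut_deltaP F :
  connected -> edge_cut F <-> exists X, delta X \subset F /\ delta X != set0.
Proof.
move=> cn; split => [cutF | [X [sXF /set0Pn [e eX]]]].
  have /existsP [x /existsP [y nxy]] : [exists x, exists y, ~~ connect (adjF F) x y].
    apply: contraLR cutF; rewrite negb_exists => /forallP all_conn.
    rewrite -leqNgt /ncomp (@eq_n_comp _ (adjF F) (adjF set0)) // => x y.
    apply/idP/idP => [|_]; first exact/connect_adjF_sub/sub0set.
    by move: (all_conn x); rewrite negb_exists => /forallP /(_ y); rewrite negbK.
  exists (gcomp F x); split; first exact: delta_gcomp.
  by apply: (delta_neq0 (y := y) cn); rewrite !inE ?connect0.
rewrite /edge_cut (ncomp_connect (cn (endp e).1)).
apply: (ncomp_gt1 (x := (endp e).1) (y := (endp e).2)).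
by apply: contraL eX => /(delta_connect sXF) eq12; rewrite in_delta eq12 eqxx.
Qed.

Lemma bridgeless_delta : connected -> bridgeless g -> forall X, #|delta X| != 1.
Proof.
move=> cn br X; apply/negP => /cards1P [e dXe]; apply: (br e).
apply/(edge_cut_deltaP _ cn); exists X; rewrite dXe subxx; split => //.
by apply/set0Pn; exists e; rewrite set11.
Qed.

Section NoBridge.
Hypothesis Hbr : forall X, #|delta X| != 1.

Lemma delta3_notsub_delta2 X Y :
  #|delta X| = 3 -> #|delta Y| = 2 -> ~~ (delta Y \subset delta X).
Proof.
move=> X3 Y2; apply/negP => sYX.
have := card_symdiff (delta X) (delta Y).
rewrite -delta_symdiff (setIidPr sYX) X3 Y2.
by move: (Hbr (symdiff X Y)); lia.
Qed.

Hypothesis Hcn : connected.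

Lemma card_delta_gt1 X x y : x \in X -> y \notin X -> 1 < #|delta X|.
Proof.
move=> xX yX; have := delta_neq0 Hcn xX yX; rewrite -card_gt0.
by move: (Hbr X); case: #|delta X| => [|[]].
Qed.

Lemma k_edge_cut3P C : k_edge_cut 3 C <-> exists2 X, delta X = C & #|C| = 3.
Proof.
split=> [[/(edge_cut_deltaP _ Hcn) [X [sXC nX]] minC C3] | [X dX C3]].
  exists X => //; apply/eqP; rewrite eqEproper sXC /=; apply/negP => pXC.
  by apply: (minC _ pXC); apply/(edge_cut_deltaP _ Hcn); exists X.
split=> // [|F pFC /(edge_cut_deltaP _ Hcn) [Y [sYF nY]]].
  by apply/(edge_cut_deltaP _ Hcn); exists X; rewrite dX -card_gt0 C3.
have sYX : delta Y \subset delta X by rewrite dX (subset_trans sYF) ?proper_sub.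
have Y3 : #|delta Y| < 3 by rewrite -C3 (leq_ltn_trans (subset_leq_card sYF)) ?proper_card.
have Y2 : #|delta Y| = 2.
  by move: (Hbr Y) nY Y3; rewrite -card_gt0; case: #|delta Y| => [|[|[]]].
have X3 : #|delta X| = 3 by rewrite dX.
by move: (delta3_notsub_delta2 X3 Y2); rewrite sYX.
Qed.

End NoBridge.

Lemma sum_card_incident A X : loopless g ->
  \sum_(v in X) #|[set e in A | incident e v]| =
  \sum_(e in A) (((endp e).1 \in X) + ((endp e).2 \in X)).
Proof.
move=> Hl.
have card_inc v : #|[set e in A | incident e v]| = \sum_(e in A) incident e v.
  rewrite -sum1_card big_mkcond [RHS]big_mkcond; apply: eq_bigr => e _.
  by rewrite inE; case: (e \in A); case: (incident e v).
under eq_bigr => v _ do rewrite card_inc.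
rewrite exchange_big; apply: eq_bigr => e _.
have inc_split v : (incident e v : nat) = ((endp e).1 == v) + ((endp e).2 == v).
  rewrite /incident; case: (eqVneq (endp e).1 v) => [e1v|] //=.
  by rewrite -e1v eq_sym (negbTE (Hl e)).
under eq_bigr => v _ do rewrite inc_split.
by rewrite big_split /= !sum_eq_mem.
Qed.

Lemma odd_sum_endpoints A X :
  odd (\sum_(e in A) (((endp e).1 \in X) + ((endp e).2 \in X))) = odd #|A :&: delta X|.
Proof.
have split_e e : ((endp e).1 \in X) + ((endp e).2 \in X) =
    (e \in delta X) + 2 * (((endp e).1 \in X) && ((endp e).2 \in X)).
  by rewrite in_delta; do 2!case: (_ \in X).
under eq_bigr => e _ do rewrite split_e.
rewrite big_split /= -big_distrr /= oddD oddM /= addbF.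
congr odd; rewrite -sum1_card big_mkcond [RHS]big_mkcond; apply: eq_bigr => e _.
by rewrite !inE; case: (e \in A).
Qed.

Lemma odd_card_matching_delta M X : loopless g -> cubic g -> perfect_matching M ->
  odd #|M :&: delta X| = odd #|delta X|.
Proof.
move=> Hl Hc pm; rewrite -[delta X in RHS]setTI.
rewrite -!odd_sum_endpoints -!sum_card_incident //.
under eq_bigr => v _ do rewrite pm.
under [in RHS]eq_bigr => v _ do rewrite incident_delta // setTI card_delta1 //.
by rewrite !sum_nat_const !oddM /= ?andbT.
Qed.

Lemma gcomp_two_comps F x y :
  ncomp F = 2 -> y \notin gcomp F x -> gcomp F y = ~: gcomp F x.
Proof.
rewrite inE => F2 nxy; have cs := adjF_csym F; set R := adjF F in cs nxy *.
apply/setP => z; rewrite !inE; have [xz|nxz] /= := boolP (connect R x z).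
  by apply/negbTE/negP => yz; move/negP: nxy; apply; apply: connect_trans xz _; rewrite cs.
case: (boolP (connect R y z)) => // nyz; exfalso.
have : #|root R x |: (root R y |: [set root R z])| <= ncomp F.
  apply: subset_leq_card; apply/subsetP => w.
  by rewrite !inE => /or3P [] /eqP ->; rewrite /= (roots_root cs).
by rewrite F2 !cardsU1 cards1 !inE !(root_connect cs) (negbTE nxy) (negbTE nxz) (negbTE nyz).
Qed.

Lemma connected_two_comps F e x y : gcomp F y = ~: gcomp F x -> joins e x y -> connected.
Proof.
move=> yE jxy; apply: (connected_from (x := x)) => z.
have conn0 := connect_adjF_sub (sub0set F).
have [xz|] := boolP (z \in gcomp F x); first by apply: conn0; rewrite inE in xz.
rewrite -in_setC -yE inE => /conn0; apply: connect_trans; apply/connect1/existsP.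
by exists e; rewrite inE jxy.
Qed.

End Coboundary.

Section ReducedGraph.
Variables (g : mgraph) (S : {set vert g}) (a b : vert g) (Ha : a \in S) (Hb : b \in S).
Local Notation G' := (reduce Ha Hb).

Lemma lift_old_val (N : {set edge G'}) (x : {e | redge_in S e}) :
  (val x \in lift_old N) = (Some x \in N).
Proof.
rewrite inE; apply/existsP/idP => [[y /andP [/eqP yx]]|]; last by exists x; rewrite eqxx.
by have <- : y = x by apply: val_inj.
Qed.

Lemma lift_old_out (N : {set edge G'}) e : ~~ redge_in S e -> e \notin lift_old N.
Proof.
move=> nSe; rewrite inE; apply/existsP => [[y /andP [/eqP ye _]]].
by rewrite -ye (valP y) in nSe.
Qed.

Lemma joins_Some (x : {e | redge_in S e}) (p q : vert G') :
  joins (Some x : edge G') p q = joins (val x) (val p) (val q).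
Proof. by rewrite /joins /= !xpair_eqE -!val_eqE. Qed.

Lemma delta_Some (X : {set vert g}) (x : {e | redge_in S e}) :
  (Some x \in delta [set y : vert G' | val y \in X]) = (val x \in delta X).
Proof. by rewrite !in_delta !inE. Qed.

End ReducedGraph.

Section Reduction.
Variables (g : mgraph) (e1 e2 : edge g) (a1 b1 a2 b2 : vert g).
Local Notation D := [set e1; e2].
Local Notation S := (gcomp D a1).
Hypotheses (Hl : loopless g) (Hc : cubic g) (Hbr : forall X : {set vert g}, #|delta X| != 1)
  (He12 : e1 != e2) (Hj1 : joins e1 a1 b1) (Hj2 : joins e2 a2 b2)
  (ha2 : a2 \in S) (hb1 : b1 \notin S) (hb2 : b2 \notin S).
Local Notation G1 := (reduce (gcomp_self D a1) ha2).
Implicit Type X : {set vert g}.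

Lemma delta_side : delta S = D.
Proof.
apply/eqP; rewrite eqEsubset delta_gcomp subUset !sub1set.
by rewrite (joins_delta _ Hj1) (joins_delta _ Hj2) gcomp_self ha2 (negbTE hb1) (negbTE hb2).
Qed.

Lemma D_notin_redge c : c \in D -> ~~ redge_in S c.
Proof. by apply: contraL => /redge_in_delta; rewrite delta_side. Qed.

Lemma a1_neq_a2 : a1 != a2.
Proof.
apply/eqP => a12.
have b_neq_a1 b : b \notin S -> (b \in [set a1]) = false.
  by move=> bS; apply: contraNF bS; rewrite inE => /eqP ->; exact: gcomp_self.
have sD : D \subset delta [set a1].
  rewrite subUset !sub1set (joins_delta _ Hj1) (joins_delta _ Hj2) -a12 set11.
  by rewrite !b_neq_a1.
have := card_symdiff (delta S) (delta [set a1]).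
rewrite -delta_symdiff delta_side (setIidPl sD) card_delta1 // cards2 He12.
by move: (Hbr (symdiff S [set a1])); lia.
Qed.

Lemma loopless_reduce : loopless G1.
Proof. by case=> [x|]; rewrite -val_eqE //=; exact: a1_neq_a2. Qed.

Lemma connected_reduce : connected G1.
Proof.
pose r : vert G1 := Sub a1 (gcomp_self D a1).
pose proj x : vert G1 := insubd r x.
have homo x z : x \in S -> adjF D x z -> z \in S /\ connect (adjF set0) (proj x) (proj z).
  move=> xS /existsP [e /andP [eD jxz]].
  have zS : z \in S.
    rewrite -(delta_connect (delta_gcomp D a1) (connect1 (_ : adjF D x z))) //.
    by apply/existsP; exists e; rewrite eD.
  split=> //; apply/connect1/existsP.
  have Se : redge_in S e by rewrite (joins_redge_in _ jxz) xS zS.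
  by exists (Some (Sub e Se)); rewrite inE joins_Some /= !insubdK.
apply: (connected_from (x := r)) => y.
have -> : y = proj (val y) by rewrite /proj valKd.
have -> : r = proj a1 by apply: val_inj; rewrite insubdK ?gcomp_self.
by apply: (connect_homo_in homo); [exact: gcomp_self | have := valP y; rewrite inE].
Qed.

Definition restr X : {set vert G1} := [set y | val y \in X].

Definition lift_edge (c : edge g) (h : edge G1) : edge g :=
  if h is Some x then val x else c.

Lemma lift_edge_inj c : c \in D -> injective (lift_edge c).
Proof.
move=> /D_notin_redge nSc [x|] [y|] //= => [xy | xc | cy].
- by congr Some; apply: val_inj.
- by rewrite -xc (valP x) in nSc.
- by rewrite cy (valP y) in nSc.
Qed.

(* Meaningful only when at most one of e1, e2 crosses X: it is then the crossing one, if any. *)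
Definition cross_edge X : edge g := if e1 \in delta X then e1 else e2.

Lemma delta_reduce X : X \subset S -> ~~ (D \subset delta X) ->
  delta X = lift_edge (cross_edge X) @: delta (restr X).
Proof.
move=> sXS; have d1 := delta_sub_joins sXS Hj1 hb1; have d2 := delta_sub_joins sXS Hj2 hb2.
rewrite subUset !sub1set /cross_edge d1 d2 => nDX.
apply: imset_preim_codom => [[x|] | e eX]; first exact/esym/delta_Some.
  move: nDX; rewrite /=; case: ifP => a1X; rewrite ?d1 ?d2 !inE /= a1X //.
  by case: (a2 \in X).
have [eD|eD] := boolP (e \in D).
  exists None => /=; case/set2P: eD eX => ->; rewrite ?d1 ?d2 => eX; first by rewrite eX.
  by move: nDX; rewrite eX andbT => /negbTE ->.
have Se : redge_in S e by apply: delta_sub_redge_in sXS eX _; rewrite delta_side.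
by exists (Some (Sub e Se)).
Qed.

Lemma cross_edge_in_D X : cross_edge X \in D.
Proof. by rewrite /cross_edge; case: ifP; rewrite !inE eqxx ?orbT. Qed.

Lemma card_delta_reduce X : X \subset S -> ~~ (D \subset delta X) ->
  #|delta (restr X)| = #|delta X|.
Proof.
move=> sXS nDX; rewrite (delta_reduce sXS nDX) card_imset //.
exact/lift_edge_inj/cross_edge_in_D.
Qed.

Lemma bridgeless_reduce (Z : {set vert G1}) : #|delta Z| != 1.
Proof.
pose r : vert G1 := Sub a1 (gcomp_self D a1).
wlog rZ : Z / r \notin Z.
  move=> hw; have [rZ|] := boolP (r \in Z); last exact: hw.
  by rewrite -deltaC; apply: hw; rewrite inE rZ.
have sZS : val @: Z \subset S by apply/subsetP => _ /imsetP [y _ ->]; exact: valP.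
have ZE : restr (val @: Z) = Z.
  by apply/setP => y; rewrite inE mem_imset //; exact: val_inj.
have nDZ : ~~ (D \subset delta (val @: Z)).
  rewrite subUset sub1set (delta_sub_joins sZS Hj1 hb1).
  by rewrite -[a1]/(val r) mem_imset ?(negbTE rZ) //; exact: val_inj.
by rewrite -ZE card_delta_reduce.
Qed.

Variables (M : {set edge g}) (M1 : {set edge G1}).
Hypotheses (HM1 : well_spread M1)
  (HMold : forall x : {e | redge_in S e}, (val x \in M) = (Some x \in M1))
  (HMnew : forall c, c \in D -> (c \in M) = (None \in M1)).

Lemma card_matching_reduce X : X \subset S -> ~~ (D \subset delta X) ->
  #|M :&: delta X| = #|M1 :&: delta (restr X)|.
Proof.
move=> sXS nDX; have inj := lift_edge_inj (cross_edge_in_D X).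
rewrite (delta_reduce sXS nDX); set f := lift_edge _.
have -> : M :&: f @: delta (restr X) = f @: (M1 :&: delta (restr X)).
  apply: imset_preim_codom => [h | _ /setIP [_ /imsetP [h _ ->]]]; last by exists h.
  rewrite !in_setI mem_imset //; congr andb.
  by case: h => [x|] /=; [exact: HMold | exact/HMnew/cross_edge_in_D].
by rewrite card_imset.
Qed.

Lemma well_spread_side :
  {in S, forall x, #|[set e in M | incident e x]| = 1} /\
  (forall X, X \subset S -> #|delta X| = 3 -> #|M :&: delta X| = 1).
Proof.
split=> [x xS | X sXS X3].
  have sxS : [set x] \subset S by rewrite sub1set.
  have nDx : ~~ (D \subset delta [set x]).
    rewrite subUset !sub1set (delta_sub_joins sxS Hj1 hb1) (delta_sub_joins sxS Hj2 hb2).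
    by rewrite !inE; apply: contra a1_neq_a2 => /andP [/eqP -> /eqP ->].
  have xE : restr [set x] = [set Sub x xS].
    by apply/setP => y; rewrite !inE -val_eqE.
  rewrite incident_delta // card_matching_reduce // xE.
  by rewrite -incident_delta ?HM1.1 //; exact: loopless_reduce.
have nDX : ~~ (D \subset delta X).
  by rewrite -delta_side delta3_notsub_delta2 // delta_side cards2 He12.
rewrite card_matching_reduce //; apply: HM1.2.
apply/(k_edge_cut3P bridgeless_reduce connected_reduce).
by exists (restr X); rewrite ?card_delta_reduce.
Qed.

End Reduction.

Section ThreeCutsAcrossTwoCut.
Variables (g : mgraph) (e1 : edge g) (u1 v1 : vert g) (S : {set vert g}) (M : {set edge g}).
Hypotheses (Hl : loopless g) (Hc : cubic g) (Hcn : connected g)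
  (Hbr : forall X : {set vert g}, #|delta X| != 1)
  (He1 : joins e1 u1 v1) (Hu1 : u1 \in S) (Hv1 : v1 \notin S) (HS : #|delta S| = 2)
  (HM : perfect_matching M)
  (HM1 : forall X : {set vert g}, X \subset S -> #|delta X| = 3 -> #|M :&: delta X| = 1)
  (HM2 : forall X : {set vert g}, X \subset ~: S -> #|delta X| = 3 -> #|M :&: delta X| = 1).
Implicit Type X : {set vert g}.

Lemma three_cut_across X : #|delta X| = 3 -> u1 \notin X ->
  ~~ (X \subset S) -> ~~ (X \subset ~: S) -> #|M :&: delta X| = 1.
Proof.
move=> X3 u1X /subsetPn [y yX yS] /subsetPn [x xX]; rewrite inE negbK => xS.
set A := X :&: S; set B := X :\: S.
have sAS : A \subset S := subsetIr X S.
have sBS : B \subset ~: S by rewrite /B setDE subsetIr.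
have dX : delta X = symdiff (delta A) (delta B).
  rewrite -delta_symdiff; congr delta; apply/setP => z.
  by rewrite in_symdiff !inE; case: (z \in X); case: (z \in S).
have A2 : 1 < #|delta A|.
  apply: (card_delta_gt1 Hbr Hcn (x := x) (y := v1));
  by rewrite !inE ?xX ?xS ?(negbTE Hv1) ?andbF.
have B2 : 1 < #|delta B|.
  apply: (card_delta_gt1 Hbr Hcn (x := y) (y := u1));
  by rewrite !inE ?yX ?yS ?(negbTE u1X) ?andbF.
have AB1 : #|delta A :&: delta B| <= 1.
  have e1S : e1 \in delta S by rewrite (joins_delta _ He1) Hu1 (negbTE Hv1).
  have e1A : e1 \notin delta A.
    by rewrite (joins_delta _ He1) !inE (negbTE u1X) (negbTE Hv1) andbF.
  have : delta A :&: delta B \subset delta S :\ e1.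
    by rewrite subsetD1 (deltaI_subset sAS sBS) in_setI negb_and e1A.
  by move/subset_leq_card; have := cardsD1 e1 (delta S); rewrite e1S HS; lia.
have := card_symdiff (delta A) (delta B); rewrite -dX X3 => cardAB.
have nXM : ~~ (delta X \subset M).
  have [A3|B3] : #|delta A| = 3 \/ #|delta B| = 3 by lia.
    by rewrite dX symdiff_not_subset ?HM1 //; lia.
  by rewrite dX symdiffC symdiff_not_subset ?HM2 // setIC; lia.
by apply: card_odd_meet3; rewrite ?odd_card_matching_delta ?X3.
Qed.

Lemma two_cut_well_spread : well_spread M.
Proof.
split=> // C /(k_edge_cut3P Hbr Hcn) [X <- X3].
wlog u1X : X X3 / u1 \notin X.
  move=> hw; have [u1X|] := boolP (u1 \in X); last exact: hw.
  by rewrite -deltaC; apply: hw; rewrite ?deltaC // inE u1X.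
have [sXS|nXS] := boolP (X \subset S); first exact: HM1.
have [sXS'|nXS'] := boolP (X \subset ~: S); first exact: HM2.
exact: three_cut_across.
Qed.

End ThreeCutsAcrossTwoCut.

Section Glue.
Variables (g : mgraph) (e1 e2 : edge g) (u1 v1 u2 v2 : vert g).
Local Notation D := [set e1; e2].
Local Notation S1 := (gcomp D u1).
Local Notation S2 := (gcomp D v1).
Hypotheses (Hl : loopless g) (Hc : cubic g) (Hcn : connected g)
  (Hbr : forall X : {set vert g}, #|delta X| != 1) (He12 : e1 != e2)
  (He1 : joins e1 u1 v1) (He2 : joins e2 u2 v2) (hu2 : u2 \in S1) (hv2 : v2 \in S2)
  (HS2 : S2 = ~: S1).
Variables (M1 : {set edge (reduce (gcomp_self D u1) hu2)})
  (M2 : {set edge (reduce (gcomp_self D v1) hv2)}).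
Hypotheses (HM1 : well_spread M1) (HM2 : well_spread M2)
  (Hagree : (None \in M1) = (None \in M2)).

Definition glue : {set edge g} :=
  (if None \in M1 then D else set0) :|: lift_old M1 :|: lift_old M2.

Let hv1 : v1 \notin S1. Proof. by rewrite -in_setC -HS2 gcomp_self. Qed.
Let hv2' : v2 \notin S1. Proof. by rewrite -in_setC -HS2. Qed.
Let hu1 : u1 \notin S2. Proof. by rewrite HS2 inE negbK gcomp_self. Qed.
Let hu2' : u2 \notin S2. Proof. by rewrite HS2 inE negbK. Qed.

Let delta_S1 : delta S1 = D := delta_side He1 He2 hu2 hv1 hv2'.
Let delta_S2 : delta S2 = D. Proof. by rewrite HS2 deltaC. Qed.

Let redge_in_S1 e : redge_in S1 e -> (e \notin D) && ~~ redge_in S2 e.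
Proof.
move=> Se; have := redge_in_delta Se; rewrite delta_S1 => -> /=.
by move: Se; rewrite /redge_in HS2 !inE => /andP [->].
Qed.

Let redge_in_S2 e : redge_in S2 e -> (e \notin D) && ~~ redge_in S1 e.
Proof.
move=> Se; have := redge_in_delta Se; rewrite delta_S2 => -> /=.
by move: Se; rewrite /redge_in HS2 !inE => /andP [/negPf ->].
Qed.

Lemma mem_glue_old1 (x : {e | redge_in S1 e}) : (val x \in glue) = (Some x \in M1).
Proof.
have /andP [nD nS2] := redge_in_S1 (valP x).
rewrite !in_setU lift_old_val (negbTE (lift_old_out _ nS2)) orbF.
by case: ifP; rewrite ?(negbTE nD) ?inE.
Qed.

Lemma mem_glue_old2 (x : {e | redge_in S2 e}) : (val x \in glue) = (Some x \in M2).
Proof.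
have /andP [nD nS1] := redge_in_S2 (valP x).
rewrite !in_setU lift_old_val (negbTE (lift_old_out _ nS1)).
by case: ifP; rewrite ?(negbTE nD) ?inE.
Qed.

Lemma mem_glue_new c : c \in D -> (c \in glue) = (None \in M1).
Proof.
move=> cD; have nS1 : ~~ redge_in S1 c by apply: contraL cD => /redge_in_S1 /andP [].
have nS2 : ~~ redge_in S2 c by apply: contraL cD => /redge_in_S2 /andP [].
rewrite !in_setU (negbTE (lift_old_out _ nS1)) (negbTE (lift_old_out _ nS2)) !orbF.
by case: ifP; rewrite ?cD ?inE.
Qed.

Lemma glue_well_spread : well_spread glue.
Proof.
have He1' : joins e1 v1 u1 by rewrite joinsC.
have He2' : joins e2 v2 u2 by rewrite joinsC.
have [pm1 cut1] := well_spread_side Hl Hc Hbr He12 He1 He2 hv1 hv2' HM1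
  mem_glue_old1 mem_glue_new.
have [pm2 cut2] := well_spread_side Hl Hc Hbr He12 He1' He2' hu1 hu2' HM2
  mem_glue_old2 (fun c cD => etrans (mem_glue_new cD) Hagree).
have pm : perfect_matching glue.
  by move=> x; have [xS1|] := boolP (x \in S1); [exact: pm1 | rewrite -in_setC -HS2; exact: pm2].
apply: (two_cut_well_spread Hl Hc Hcn Hbr He1 (gcomp_self D u1) hv1 _ pm cut1).
  by rewrite delta_S1 cards2 He12.
by rewrite -HS2; exact: cut2.
Qed.

End Glue.

Theorem theorem2 (g : mgraph) (e1 e2 : edge g) (u1 v1 u2 v2 : vert g)
  (Hloop : loopless g) (Hcubic : cubic g) (Hbr : bridgeless g)
  (Hcut : k_edge_cut 2 [set e1; e2])
  (He1 : joins e1 u1 v1) (He2 : joins e2 u2 v2)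
  (Htwo : ncomp [set e1; e2] = 2)
  (hu2 : u2 \in gcomp [set e1; e2] u1)
  (hv2 : v2 \in gcomp [set e1; e2] v1)
  (Hsep : v1 \notin gcomp [set e1; e2] u1)
  (M1 : {set edge (reduce (gcomp_self [set e1; e2] u1) hu2)})
  (M2 : {set edge (reduce (gcomp_self [set e1; e2] v1) hv2)})
  (HM1 : well_spread M1) (HM2 : well_spread M2)
  (Hagree : (None \in M1) = (None \in M2)) :
  well_spread ((if None \in M1 then [set e1; e2] else set0)
               :|: lift_old M1 :|: lift_old M2).
Proof.
have e12 : e1 != e2 by case: Hcut => _ _; rewrite cards2; case: (e1 != e2).
have S2E := gcomp_two_comps Htwo Hsep.
have cn := connected_two_comps S2E He1.
exact (glue_well_spread Hloop Hcubic cn (bridgeless_delta cn Hbr) e12 He1 He2 S2E HM1 HM2 Hagree).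
Qed.
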